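(* In a single-item environment with a single real bidder whose value is drawn from the exponential distribution with mean $1$, for any $\epsilon>0$ the Deferred-Revelation Auction (DRA) over a public ledger, as described in the context, is not credible for the collateral $f=1-\epsilon$.
   Context: The bidder is quasi-linear; the exponential distribution with mean $1$ has CDF $1-e^{-t}$, virtual value $\varphi(v)=v-1$, monopoly reserve $1$. DRA over a public ledger (visible to all) with a perfectly hiding, perfectly binding, non-malleable commitment scheme: (1) every participant (the real bidder and any fake bids fabricated by the auctioneer) commits to an identifier and a bid and deposits collateral $f$; the auctioneer declares a matroid feasibility constraint $\hat{\mathcal{F}}$ and distributions $\hat D_j$ (virtual values $\hat\varphi_j$) for all committed bids; (2) each committed bid is revealed or concealed, and collateral of concealed bids is burnt; (3) among revealed bids, the set $S\in\hat{\mathcal{F}}$ maximizing $\sum_{i\in S}\hat\varphi_i(b_i)$ (lexicographic tie-breaking) is allocated, each allocated bidder paying its critical bid. The auctioneer may fabricate bids, misreport distributions and constraint (keeping the allocated real bidders feasible in the true constraint), and choose which fake bids to conceal after seeing revealed real bids. Its revenue is the real bidder's payment minus burnt collateral of its concealed fake bids. The DRA is credible for collateral $f$ if, when the real bidder bids truthfully, the auctioneer maximizes expected revenue by fabricating no bids and reporting the true distribution and constraint. *)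

From HB Require Import structures.
From mathcomp Require Import all_boot all_order all_algebra.
From mathcomp Require Import all_classical all_reals all_analysis.
Set Implicit Arguments. Unset Strict Implicit. Unset Printing Implicit Defensive.
Import Order.TTheory GRing.Theory Num.Theory.
Import numFieldNormedType.Exports.
Local Open Scope ring_scope.

Record dist (R : realType) := Dist {
  pdf : R -> R;
  pdf_ge0 : forall x, 0 <= pdf x;
  pdf_meas : measurable_fun setT%classic pdf;
  pdf_int1 : (\int[lebesgue_measure]_x (pdf x)%:E = 1)%E }.

Definition cdf (R : realType) (D : dist R) (x : R) : R :=
  fine (\int[lebesgue_measure]_(t in `]-oo, x]) (pdf D t)%:E)%E.

(* Myerson virtual value  phi(b) = b - (1 - F(b)) / f(b)
   (MathComp convention: division by 0 yields 0). *)
Definition vval (R : realType) (D : dist R) (b : R) : R :=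
  b - (1 - cdf D b) / pdf D b.

Definition exp1 (R : realType) : dist R :=
  @Dist R (exponential_pdf 1)
    (fun x => exponential_pdf_ge0 ler01 x)
    (@measurable_exponential_pdf R 1)
    (integral_exponential_pdf ltr01).

Definition is_matroid (n : nat) (I : {set 'I_n} -> bool) : Prop :=
  [/\ I (finset.set0 : {set 'I_n}),
      (forall A B : {set 'I_n}, B \subset A -> I A -> I B) &
      (forall A B : {set 'I_n}, I A -> I B -> (#|A| < #|B|)%N ->
          exists2 x, x \in B :\: A & I (x |: A))].

Definition lex_before (n : nat) (S T : {set 'I_n}) : bool :=
  [exists i, [&& i \in S, i \notin T &
       [forall j : 'I_n, ((j < i)%N) ==> ((j \in S) == (j \in T))]]].

Section Allocation.
Variables (R : realType) (n : nat).
Variables (feas : {set 'I_n} -> bool) (decl : 'I_n -> dist R).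

Definition weight (b : 'I_n -> R) (S : {set 'I_n}) : R :=
  \sum_(i in S) vval (decl i) (b i).

Definition candidate (rev : {set 'I_n}) (S : {set 'I_n}) : bool :=
  feas S && (S \subset rev).

Definition chosen (b : 'I_n -> R) (rev : {set 'I_n}) (S : {set 'I_n}) : bool :=
  [&& candidate rev S,
      [forall T, candidate rev T ==> (weight b T <= weight b S)] &
      [forall T, [&& candidate rev T, weight b T == weight b S & T != S]
                    ==> lex_before S T]].

Definition alloc (b : 'I_n -> R) (rev : {set 'I_n}) : {set 'I_n} :=
  odflt finset.set0 [pick S | chosen b rev S].

Definition upd (b : 'I_n -> R) (i : 'I_n) (x : R) : 'I_n -> R :=
  fun j => if j == i then x else b j.

Definition critical (b : 'I_n -> R) (rev : {set 'I_n}) (i : 'I_n) : R :=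
  inf [set x : R | 0 <= x /\ i \in alloc (upd b i x) rev]%classic.

End Allocation.

(* np committed bids, with identifiers 'I_np; the real bidder has       *)
(* identifier [real] (its position among the identifiers is determined  *)
(* by the identifiers the auctioneer chooses for the fakes); all other  *)
(* identifiers are fake bids fabricated by the auctioneer.              *)
Record strategy (R : realType) := Strategy {
  np : nat;
  real : 'I_np;
  fbid : 'I_np -> R;                   (* committed fake bids (value at [real] unused) *)
  fbid_ge0 : forall i, 0 <= fbid i;
  decl : 'I_np -> dist R;
  feas : {set 'I_np} -> bool;
  feas_matroid : is_matroid feas;
  conceal : R -> {set 'I_np}           (* fakes concealed, after seeing the revealed real bid *)
}.
Arguments np {R} s.
Arguments real {R} s.
Arguments fbid {R} s _.
Arguments decl {R} s _.
Arguments feas {R} s _.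
Arguments conceal {R} s _.

Section Outcome.
Variables (R : realType) (s : strategy R).

Definition bids (v : R) : 'I_(np s) -> R :=
  fun i => if i == real s then v else fbid s i.

Definition concealed (v : R) : {set 'I_(np s)} := conceal s v :\ real s.

Definition revealed (v : R) : {set 'I_(np s)} := ~: concealed v.

Definition allocation (v : R) : {set 'I_(np s)} :=
  alloc (feas s) (decl s) (bids v) (revealed v).

Definition real_payment (v : R) : R :=
  if real s \in allocation v
  then critical (feas s) (decl s) (bids v) (revealed v) (real s) else 0.

(* auctioneer revenue with collateral f: real payment minus burnt collateral *)
Definition revenue (f : R) (v : R) : R :=
  real_payment v - f * (#|concealed v|)%:R.

Definition true_feasible : Prop :=
  forall v, 0 <= v -> (#|allocation v :&: [set real s]| <= 1)%N.

(* expected revenue when the real value is Exp(1) and bids truthfully *)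
Definition exp_revenue (f : R) : \bar R :=
  (\int[lebesgue_measure]_v (revenue f v * exponential_pdf 1 v)%:E)%E.

End Outcome.

Definition honest (R : realType) : strategy R.
Proof.
refine (@Strategy R 1 ord0 (fun _ => 0) (fun _ => lexx 0) (fun _ => exp1 R)
          (fun S => (#|S| <= 1)%N) _ (fun _ => finset.set0)).
split.
- by rewrite finset.cards0.
- by move=> A B /subset_leq_card AB HA; exact: leq_trans AB HA.
- move=> A B HA HB AB.
  have A0 : #|A| = 0%N by apply/eqP; rewrite -leqn0 -ltnS; exact: leq_trans AB HB.
  have : (0 < #|B|)%N by move: AB; rewrite A0.
  case/card_gt0P => x xB; exists x.
  + rewrite finset.in_setD xB andbT; apply/negP => xA.
    have : (0 < #|A|)%N by apply/card_gt0P; exists x.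
    by rewrite A0.
  + by rewrite (_ : A = finset.set0) ?finset.setU0 ?finset.cards1 //; apply/eqP; rewrite -finset.cards_eq0 A0.
Defined.

Definition credible (R : realType) (f : R) : Prop :=
  forall s : strategy R, true_feasible s ->
    measurable_fun setT%classic (revenue s f) ->
    (exp_revenue s f <= exp_revenue (honest R) f)%E.

(* Idea: the auctioneer commits one fake bid r = 1 + eps, declaring it (like
   the real bid) to be Exp(1), so both virtual values are b - 1.  If the real
   value v lies in [1, r) the fake would win, so the auctioneer conceals it,
   burning f = 1 - eps, and the real bidder pays the reserve 1: net eps.  If
   v >= r the fake is revealed and the real bidder, who wins ties by having the
   smaller identifier, pays r.  The expected revenue is
   eps (e^-1 - e^-r) + r e^-r = e^-1 (eps + e^-eps), which exceeds the honest
   revenue P[v >= 1] = e^-1 because e^-eps > 1 - eps. *)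

From Pilot Require Import Defs.
From HB Require Import structures.
From mathcomp Require Import all_boot all_order all_algebra.
From mathcomp Require Import all_classical all_reals all_analysis.
From mathcomp Require Import measurable_realfun lra.
Import Order.TTheory GRing.Theory Num.Theory.
Import numFieldNormedType.Exports.
Local Open Scope ring_scope.

Set Implicit Arguments.
Unset Strict Implicit.
Unset Printing Implicit Defensive.

Section Allocation.
Variables (R : realType) (n : nat).
Variables (feas : {set 'I_n} -> bool) (dec : 'I_n -> dist R).

Lemma lex_before_asym (S T : {set 'I_n}) :
  lex_before S T -> ~~ lex_before T S.
Proof.
case/existsP => i /and3P[iS iT /forallP Si]; apply/existsP => -[k].
case/and3P => kT kS /forallP Sk.
case: (ltngtP i k) => [ik|ki|/val_inj ik].
- by move: (Sk i); rewrite ik iS (negbTE iT).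
- by move: (Si k); rewrite ki kT (negbTE kS).
- by rewrite -ik iS in kS.
Qed.

Lemma chosen_inj b rev S T :
  chosen feas dec b rev S -> chosen feas dec b rev T -> S = T.
Proof.
case/and3P => cS /forallP maxS /forallP lexS.
case/and3P => cT /forallP maxT /forallP lexT.
apply/eqP; apply: contraT => ST.
have wTS : weight dec b T == weight dec b S.
  by rewrite eq_le (implyP (maxS T) cT) (implyP (maxT S) cS).
have /lex_before_asym/negP[] : lex_before S T.
  by apply: (implyP (lexS T)); rewrite cT wTS eq_sym ST.
by apply: (implyP (lexT S)); rewrite cS eq_sym wTS.
Qed.

Lemma alloc_chosen b rev S : chosen feas dec b rev S -> alloc feas dec b rev = S.
Proof.
rewrite /alloc; case: pickP => [T chT chS|-> //]; exact: chosen_inj chT chS.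
Qed.

Lemma critical_threshold b rev i (a : R) : 0 <= a ->
  (forall x, 0 <= x -> (i \in alloc feas dec (upd b i x) rev) = (a <= x)) ->
  critical feas dec b rev i = a.
Proof.
move=> a0 allocE; rewrite /critical -[RHS](@inf_itv _ +oo%O true) //.
congr inf; apply/seteqP; split => x /=; rewrite in_itv /= andbT.
  by case=> x0; rewrite allocE.
by move=> ax; have x0 := le_trans a0 ax; rewrite allocE.
Qed.

End Allocation.

Definition single_item (n : nat) (S : {set 'I_n}) : bool := (#|S| <= 1)%N.

Lemma single_item_matroid n : is_matroid (@single_item n).
Proof.
split=> [|A B /subset_leq_card AB|A B _ B1 AB]; rewrite /single_item ?cards0 //.
- exact: leq_trans.
- have /cards0_eq -> : #|A| = 0%N by apply/eqP; rewrite -leqn0 -ltnS (leq_trans AB).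
  have /card_gt0P[x xB] : (0 < #|B|)%N by apply: leq_ltn_trans AB.
  by exists x; rewrite ?finset.setD0 ?finset.setU0 ?cards1.
Qed.

Section SingleItem.
Variables (R : realType) (n : nat) (dec : 'I_n -> dist R).
Variables (b : 'I_n -> R) (rev : {set 'I_n}).
Local Notation w i := (vval (dec i) (b i)).

Lemma candidate_single_item T : candidate (@single_item n) rev T ->
  T = finset.set0 \/ exists2 i, i \in rev & T = [set i].
Proof.
case/andP; rewrite /single_item leq_eqVlt ltnS leqn0.
case/orP => [/cards1P[i ->]|/eqP/cards0_eq -> _]; last by left.
by rewrite finset.sub1set; right; exists i.
Qed.

Lemma chosen_single_item0 : (forall i, i \in rev -> w i < 0) ->
  chosen (@single_item n) dec b rev finset.set0.
Proof.
move=> w_lt0; rewrite /chosen /candidate /single_item cards0 finset.sub0set /=.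
apply/andP; split; apply/forallP => T; apply/implyP.
  case/candidate_single_item=> [->|[i ir ->]]; rewrite /weight ?big_set1 big_set0 //.
  by rewrite ltW ?w_lt0.
case/and3P=> /candidate_single_item[->|[i ir ->]] wT neT; first by rewrite eqxx in neT.
by move: wT; rewrite /weight big_set1 big_set0 lt_eqF ?w_lt0.
Qed.

Lemma chosen_single_item1 i : i \in rev -> 0 <= w i ->
  (forall j, j \in rev -> j != i -> (w j < w i) || ((w j == w i) && (i < j)%N)) ->
  chosen (@single_item n) dec b rev [set i].
Proof.
move=> ir wi_ge0 beats.
rewrite /chosen /candidate /single_item cards1 finset.sub1set ir /=.
apply/andP; split; apply/forallP => T; apply/implyP.
  case/candidate_single_item=> [->|[j jr ->]]; rewrite /weight !big_set1 ?big_set0 //.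
  have [->//|ji] := eqVneq j i.
  by case/orP: (beats j jr ji) => [/ltW|/andP[/eqP->]].
case/and3P=> /candidate_single_item[->|[j jr ->]] wT neT.
  apply/existsP; exists i; rewrite set11 finset.in_set0 /=.
  apply/forallP => k; apply/implyP => ki.
  by rewrite finset.in_set1 finset.in_set0 -val_eqE (ltn_eqF ki).
have ji : j != i by apply: contraNneq neT => ->.
move: wT; rewrite /weight !big_set1 => wT.
case/orP: (beats j jr ji) => [|/andP[_ ij]]; first by rewrite lt_neqAle wT.
apply/existsP; exists i; rewrite set11 finset.in_set1 eq_sym ji /=.
apply/forallP => k; apply/implyP => ki.
by rewrite !finset.in_set1 -!val_eqE (ltn_eqF ki) (ltn_eqF (ltn_trans ki ij)).
Qed.

End SingleItem.

Section IndicatorIntegral.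
Context d (T : measurableType d) (R : realType).
Variable mu : {measure set T -> \bar R}.

Lemma integral_cst_indicM (c : R) (A : set T) (p : T -> R) :
  0 <= c -> measurable A -> measurable_fun A p -> (forall x, A x -> 0 <= p x) ->
  (\int[mu]_x (c * \1_A x * p x)%:E = c%:E * \int[mu]_(x in A) (p x)%:E)%E.
Proof.
move=> c0 mA mp p0; rewrite -ge0_integralZl_EFin //; last exact/measurable_EFinP.
rewrite [RHS]integral_mkcond; apply: eq_integral => x _.
by rewrite patchE indicE; case: ifP => _; rewrite ?mulr1 ?mulr0 ?mul0r ?EFinM.
Qed.

End IndicatorIntegral.

Section Exponential.
Local Open Scope classical_set_scope.
Variable R : realType.
Notation mu := (@lebesgue_measure R).
Notation pe := (@exponential_pdf R 1).

Lemma integral_exp1_itvcy (a : R) : 0 <= a ->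
  (\int[mu]_(x in `[a, +oo[) (pe x)%:E = (expR (- a))%:E)%E.
Proof.
move=> a0.
have cexpN : continuous (fun x : R^o => expR (- 1 * x)).
  move=> x; apply: continuous_comp; last exact: continuous_expR.
  by apply: continuousM => //; apply: (@continuousN _ R^o); exact: cst_continuous.
rewrite (@ge0_continuous_FTC2y _ _ (fun x => - expR (- 1 * x)) _ 0) //.
- by rewrite mulN1r EFinN oppeK add0e.
- by move=> x _; exact: exponential_pdf_ge0.
- apply: (@continuous_subspaceW R^o _ _ [set` `[0, +oo[%R]).
    by apply: subset_itvr; rewrite bnd_simp.
  exact: within_continuous_exponential_pdf.
- rewrite -oppr0; apply: cvgN.
  under eq_fun do rewrite mulN1r.
  exact: cvgr_expR.
- by apply: cvgN; apply/cvg_at_right_filter; exact: cexpN.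
- move=> x; rewrite in_itv /= andbT => ax.
  by apply: derive1_exponential_pdf; rewrite in_itv /= andbT (le_lt_trans a0 ax).
Qed.

Lemma cdf_exp1 (x : R) : 0 <= x -> Defs.cdf (exp1 R) x = 1 - expR (- x).
Proof.
move=> x0; rewrite /Defs.cdf /=.
have := integral_exponential_pdf (@ltr01 R).
rewrite -(setUv `]-oo, x]) ge0_integral_setU //=; last 4 first.
- exact: measurableC.
- by rewrite setUv; apply/measurable_EFinP; exact: measurable_exponential_pdf.
- by move=> y _; rewrite lee_fin exponential_pdf_ge0.
- exact/disj_setPCl.
rewrite setCitvl integral_itv_obnd_cbnd; last first.
  by apply/measurable_EFinP/measurable_funTS; exact: measurable_exponential_pdf.
rewrite integral_exp1_itvcy //.
by case: (\int[_]_(_ in _) _)%E => [r||] //= [<-]; rewrite addrK.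
Qed.

(* For x < 0 the density vanishes, and division by 0 yields 0. *)
Lemma vval_exp1 (x : R) : vval (exp1 R) x = if 0 <= x then x - 1 else x.
Proof.
rewrite /vval; case: ifPn => x0.
  rewrite cdf_exp1 // /= exponential_pdfE // mul1r mulN1r subKr.
  by rewrite divff ?gt_eqF ?expR_gt0.
by rewrite /= lt0_exponential_pdf ?invr0 ?mulr0 ?subr0 // ltNge.
Qed.

Lemma integral_exp1_itvco (a b : R) : 0 <= a <= b ->
  (\int[mu]_(x in `[a, b[) (pe x)%:E = (expR (- a) - expR (- b))%:E)%E.
Proof.
case/andP=> a0 ab; have b0 := le_trans a0 ab.
have := integral_exp1_itvcy a0.
rewrite (@itv_bndbnd_setU _ _ _ (BLeft b)) ?bnd_simp // ge0_integral_setU //=.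
- rewrite integral_exp1_itvcy //.
  by case: (\int[_]_(_ in _) _)%E => [r||] //= [<-]; rewrite addrK.
- by apply/measurable_EFinP/measurable_funTS; exact: measurable_exponential_pdf.
- by move=> x _; rewrite lee_fin exponential_pdf_ge0.
- apply/disj_setPS => x [/=]; rewrite !in_itv /= andbT => /andP[_ xb] bx.
  by move: (lt_le_trans xb bx); rewrite ltxx.
Qed.

Definition two_step (a b c1 c2 : R) (v : R) : R :=
  c1 * \1_`[a, b[ v + c2 * \1_`[b, +oo[ v.

Lemma two_stepE (a b c1 c2 v : R) : a <= b ->
  two_step a b c1 c2 v = if v < a then 0 else if v < b then c1 else c2.
Proof.
move=> ab; rewrite /two_step !indicE !mem_setE !in_itv /= andbT.
case: (ltP v a) => [va|av]; case: (ltP v b) => [vb|bv] /=;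
  rewrite ?mulr1 ?mulr0 ?addr0 ?add0r //.
by move: (lt_le_trans va (le_trans ab bv)); rewrite ltxx.
Qed.

Lemma measurable_two_step a b c1 c2 : measurable_fun setT (two_step a b c1 c2).
Proof.
by apply: measurable_funD; apply: measurable_funM => //; exact: measurable_indic.
Qed.

Lemma integral_two_step_exp1 (a b c1 c2 : R) : 0 <= a <= b -> 0 <= c1 -> 0 <= c2 ->
  (\int[mu]_v (two_step a b c1 c2 v * pe v)%:E =
   (c1 * (expR (- a) - expR (- b)) + c2 * expR (- b))%:E)%E.
Proof.
move=> /andP[a0 ab] c10 c20; have b0 := le_trans a0 ab.
have pe0 x : 0 <= pe x by exact: exponential_pdf_ge0.
have mpe (A : set R) : measurable_fun A pe.
  by apply: measurable_funTS; exact: measurable_exponential_pdf.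
have step_ge0 c (A : set R) x : 0 <= c -> (0 <= (c * \1_A x * pe x)%:E)%E.
  by move=> c0; rewrite lee_fin !mulr_ge0 ?indic_ge0.
have mstep c (A : set R) :
    measurable A -> measurable_fun setT (fun x => (c * \1_A x * pe x)%:E).
  move=> mA; apply/measurable_EFinP/measurable_funM => //.
  by apply: measurable_funM => //; exact: measurable_indic.
under eq_integral do rewrite /two_step mulrDl EFinD.
rewrite ge0_integralD //=; last 4 first.
- by move=> *; exact: step_ge0.
- exact: mstep.
- by move=> *; exact: step_ge0.
- exact: mstep.
rewrite !(integral_cst_indicM mu) //; [|exact: mpe..].
by rewrite integral_exp1_itvco ?a0 // integral_exp1_itvcy.
Qed.

End Exponential.

Section Exp1Allocation.
Variable R : realType.
Local Notation alloc1 n := (alloc (@single_item n) (fun _ => exp1 R)).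
Local Notation critical1 n := (critical (@single_item n) (fun _ => exp1 R)).

Lemma alloc_exp1_lone n (i : 'I_n) (c : 'I_n -> R) :
  alloc1 n c [set i] = if 1 <= c i then [set i] else finset.set0.
Proof.
have onlyi j : j \in [set i] -> j = i by rewrite finset.in_set1 => /eqP.
case: ifPn => ci; apply: alloc_chosen.
  apply: chosen_single_item1; rewrite ?set11 ?vval_exp1 ?(le_trans ler01 ci) //.
    by rewrite subr_ge0.
  by move=> j /onlyi ->; rewrite eqxx.
apply: chosen_single_item0 => j /onlyi ->; rewrite vval_exp1.
by case: ifPn => [_|c0]; rewrite ?subr_lt0 ltNge.
Qed.

Lemma critical_exp1_lone n (i : 'I_n) (c : 'I_n -> R) : critical1 n c [set i] i = 1.
Proof.
apply: critical_threshold => // x _; rewrite alloc_exp1_lone /upd eqxx.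
by case: ifP; rewrite ?set11 ?finset.in_set0.
Qed.

Lemma ord2P (j : 'I_2) : j = ord0 \/ j = ord_max.
Proof. by case: j => -[|[|//]] ?; [left|right]; exact: val_inj. Qed.

Lemma alloc_exp1_pair (c : 'I_2 -> R) : 1 <= c ord_max ->
  alloc1 2 c [set: 'I_2] = if c ord_max <= c ord0 then [set ord0] else [set ord_max].
Proof.
move=> c1; have c0 := le_trans ler01 c1.
have wmax : vval (exp1 R) (c ord_max) = c ord_max - 1 by rewrite vval_exp1 c0.
case: ifPn => [le_max0|lt_0max]; apply: alloc_chosen; apply: chosen_single_item1 => //.
- by rewrite vval_exp1 (le_trans c0 le_max0) subr_ge0 (le_trans c1 le_max0).
- move=> j _; case: (ord2P j) => -> // _.
  rewrite wmax vval_exp1 (le_trans c0 le_max0) andbT.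
  by rewrite orbC -le_eqVlt lerD2r.
- by rewrite wmax subr_ge0.
- move=> j _; case: (ord2P j) => -> // _.
  rewrite wmax vval_exp1 -ltNge in lt_0max *.
  case: ifPn => [_|]; first by rewrite ltrD2r lt_0max.
  by rewrite -ltNge => /lt_le_trans->; rewrite ?subr_ge0.
Qed.

Lemma critical_exp1_pair (c : 'I_2 -> R) : 1 <= c ord_max ->
  critical1 2 c [set: 'I_2] ord0 = c ord_max.
Proof.
move=> c1; apply: critical_threshold => [|x _]; first exact: le_trans ler01 c1.
rewrite alloc_exp1_pair /upd //=.
by case: ifP; rewrite ?set11 ?finset.in_set1.
Qed.

End Exp1Allocation.


Section Strategies.
Variable R : realType.

Lemma true_feasibleT (s : strategy R) : true_feasible s.
Proof.
by move=> v _; rewrite (leq_trans (subset_leq_card (finset.subsetIr _ _))) ?cards1.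
Qed.

Lemma revenue_honest (f v : R) : revenue (honest R) f v = \1_`[1, +oo[ v.
Proof.
rewrite /revenue /real_payment /allocation /revealed /concealed /=.
rewrite finset.set0D cards0 mulr0 subr0 finset.setC0.
have -> : [set: 'I_1] = [set ord0].
  by apply/finset.setP => j; rewrite !finset.inE ord1 eqxx.
rewrite alloc_exp1_lone critical_exp1_lone /bids eqxx.
rewrite indicE mem_setE in_itv /= andbT.
by case: (1 <= v); rewrite ?set11 ?finset.in_set0.
Qed.

Lemma exp_revenue_honest (f : R) : exp_revenue (honest R) f = (expR (-1))%:E.
Proof.
rewrite /exp_revenue; under eq_integral do rewrite revenue_honest -[\1_ _ _]mul1r.
rewrite integral_cst_indicM // ?integral_exp1_itvcy ?mul1e //.
- by apply: measurable_funTS; exact: measurable_exponential_pdf.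
- by move=> x _; exact: exponential_pdf_ge0.
Qed.

Variables (r : R) (r1 : 1 <= r).
Let r_ge0 : 0 <= r := le_trans ler01 r1.

Definition shill_conceal (v : R) : {set 'I_2} :=
  if (1 <= v) && (v < r) then [set ord_max] else finset.set0.

Definition shill : strategy R :=
  @Strategy R 2 ord0 (fun _ => r) (fun _ => r_ge0) (fun _ => exp1 R)
    (@single_item 2) (@single_item_matroid 2) shill_conceal.

Lemma revenue_shill (f v : R) :
  revenue shill f v = if v < 1 then 0 else if v < r then 1 - f else r.
Proof.
rewrite /revenue /real_payment /allocation /revealed /concealed /= /shill_conceal.
have [/[dup] vin /andP[v1 vr]|vout] := boolP (1 <= v < r); rewrite ?vin ?(negbTE vout).
  have -> : [set ord_max] :\ ord0 = [set ord_max :> 'I_2].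
    by apply/finset.setP => j; rewrite !finset.inE andb_idl // => /eqP ->.
  have -> : ~: [set ord_max] = [set ord0 :> 'I_2].
    by apply/finset.setP => j; rewrite !finset.inE; case: (ord2P j) => ->.
  rewrite alloc_exp1_lone critical_exp1_lone /bids eqxx v1 set11 cards1.
  by rewrite ltNge v1 vr mulr1.
rewrite finset.set0D cards0 mulr0 subr0 finset.setC0.
rewrite alloc_exp1_pair /bids ?critical_exp1_pair //=.
case: (leP r v) => [rv|vr]; first by rewrite set11 ltNge (le_trans r1 rv).
by move: vout; rewrite vr andbT -ltNge finset.in_set1 => ->.
Qed.

Lemma revenue_shill_two_step (f : R) : revenue shill f =1 two_step 1 r (1 - f) r.
Proof. by move=> v; rewrite revenue_shill two_stepE. Qed.

Lemma measurable_revenue_shill (f : R) : measurable_fun setT%classic (revenue shill f).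
Proof. by rewrite (funext (revenue_shill_two_step f)); exact: measurable_two_step. Qed.

Lemma exp_revenue_shill (f : R) : f <= 1 ->
  exp_revenue shill f = ((1 - f) * (expR (-1) - expR (- r)) + r * expR (- r))%:E.
Proof.
move=> f1; rewrite /exp_revenue; under eq_integral do rewrite revenue_shill_two_step.
by rewrite integral_two_step_exp1 ?ler01 ?r1 ?subr_ge0.
Qed.

End Strategies.

Theorem mainTheorem7 (R : realType) (eps : R) (heps : 0 < eps) :
  ~ credible (1 - eps).
Proof.
have r1 : 1 <= 1 + eps by rewrite lerDl ltW.
have f1 : 1 - eps <= 1 by rewrite gerBl ltW.
move=> /(_ (shill r1) (true_feasibleT _) (measurable_revenue_shill r1 _)).
rewrite exp_revenue_shill // exp_revenue_honest lee_fin subKr.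
apply/negP; rewrite -ltNge opprD expRD.
have e0 : 0 < expR (-1) :> R := expR_gt0 _.
have : 1 - eps < expR (- eps) by rewrite expR_gt1Dx // oppr_eq0 gt_eqF.
nra.
Qed.
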